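(* Let $P$ be a finite graded poset with rank levels $P_1,\dots,P_d$ and full rank lower ideals $L_j=P_1\sqcup\cdots\sqcup P_j$ ($0\le j\le d$, $L_0=\emptyset$). Let $m\ge1$ and identify a lower ideal $I$ of $[m]\times P$ with $(I_1,\dots,I_m)$, $I_j=\{a\in P:(j,a)\in I\}$; call it full rank if every $I_j$ is one of $L_0,\dots,L_d$. Then a lower ideal $(I_1,\dots,I_m)$ of $[m]\times P$ is full rank if and only if every lower ideal in its orbit under $\mathfrak{X}_{[m]\times P}$ is full rank.
   Context: A finite poset is graded if all maximal chains have the same length; the rank function $r$ has minimal elements of rank $1$ and $r(x)=r(y)+1$ when $x$ covers $y$; $P_j=r^{-1}(j)$. $[m]\times P$ carries the product order. For a finite poset $Q$ and a lower ideal $I$, $\mathfrak{X}_Q(I)=\{y\in Q:y\le x\text{ for some }x\in\min(Q\setminus I)\}$; this is a bijection on lower ideals. *)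

From mathcomp Require Import all_boot all_order.
Set Implicit Arguments. Unset Strict Implicit. Unset Printing Implicit Defensive.
Import Order.Theory.
Local Open Scope order_scope.

Section PosetDefs.
Variables (disp : Order.disp_t) (P : finPOrderType disp).

Definition is_chain (C : {set P}) : bool :=
  [forall x in C, forall y in C, (x <= y) || (y <= x)].
Definition is_max_chain (C : {set P}) : bool :=
  is_chain C && [forall D : {set P}, (is_chain D && (C \subset D)) ==> (D == C)].
Definition graded : Prop :=
  forall C D : {set P}, is_max_chain C -> is_max_chain D -> #|C| = #|D|.

Definition covers (x y : P) : bool := (y < x) && [forall z, ~~ ((y < z) && (z < x))].
Definition is_minimal (x : P) : bool := [forall y, ~~ (y < x)].

Definition rank_fun (r : P -> nat) : Prop :=
  (forall x, is_minimal x -> r x = 1%N) /\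
  (forall x y, covers x y -> r x = (r y).+1).

Definition top_rank (r : P -> nat) : nat := \max_(a : P) r a.
Definition Lfull (r : P -> nat) (j : nat) : {set P} := [set a | (r a <= j)%N].

End PosetDefs.

Section Rowmotion.
Variables (T : finType) (le : rel T).
Definition lower_ideal (I : {set T}) : Prop :=
  forall x y, le y x -> x \in I -> y \in I.
Definition min_compl (I : {set T}) : {set T} :=
  [set x | (x \notin I) && [forall y, ((y \notin I) && le y x) ==> (y == x)]].
Definition Xmap (I : {set T}) : {set T} :=
  [set y | [exists x, (x \in min_compl I) && le y x]].
End Rowmotion.

(* product order on [m] x P, with [m] = 'I_m (levels 0..m-1) *)
Definition prodle (m : nat) (disp : Order.disp_t) (P : finPOrderType disp)
  (p q : 'I_m * P) : bool := ((p.1 <= q.1)%N && (p.2 <= q.2)%O).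

Definition slice (m : nat) (disp : Order.disp_t) (P : finPOrderType disp)
  (I : {set 'I_m * P}) (j : 'I_m) : {set P} := [set a | (j, a) \in I].

Definition full_rank (m : nat) (disp : Order.disp_t) (P : finPOrderType disp)
  (r : P -> nat) (I : {set 'I_m * P}) : Prop :=
  forall j : 'I_m, exists k : nat, (k <= top_rank r)%N /\ slice I j = Lfull r k.

From mathcomp Require Import all_boot all_order zify.
Set Implicit Arguments. Unset Strict Implicit. Unset Printing Implicit Defensive.
Import Order.Theory.
Local Open Scope order_scope.

(* If I is full rank with rows I_j = L_(k_j), then whether (j, a) is minimal in
   the complement of I depends only on j and the rank of a: it happens exactly
   when r a = k_j + 1 and a lies in every row i < j.  Row j of X(I) is the
   down-set of the minimal elements in rows >= j, hence the down-set of a union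
   of whole rank levels; since P is graded, every element of rank <= t lies
   below one of rank t, so this down-set is L_K for the largest such rank K.
   Thus X preserves full rank, and the converse is the case n = 0. *)

Section FinitePoset.
Variables (disp : Order.disp_t) (P : finPOrderType disp).

Lemma proper_downset (b c : P) : b < c ->
  [set x | x <= b] \proper [set x | x <= c].
Proof.
move=> lt_bc; apply/properP; split.
  by apply/subsetP=> x; rewrite !inE => /le_trans; apply; apply: ltW.
by exists c; rewrite !inE ?lexx // lt_geF.
Qed.

(* Maximising the size of the down-set yields a covered (resp. maximal) element. *)
Lemma exists_covered_above (y z : P) : y < z -> exists2 b, y <= b & covers z b.
Proof.
move=> lt_yz; have y_ok : (y <= y) && (y < z) by rewrite lexx lt_yz.
case: (@arg_maxnP P y (fun b => (y <= b) && (b < z)) (fun b => #|[set x | x <= b]|) y_ok)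
  => b /andP[le_yb lt_bz] b_max.
exists b => //; rewrite /covers lt_bz /=.
apply/forallP=> c; apply/negP=> /andP[lt_bc lt_cz].
have := b_max c; rewrite (le_trans le_yb (ltW lt_bc)) lt_cz => /(_ isT) /=.
by rewrite leqNgt (proper_card (proper_downset lt_bc)).
Qed.

Lemma exists_maximal_above (y : P) : exists2 x, y <= x & forall v, ~~ (x < v).
Proof.
have y_ok : y <= y by [].
case: (@arg_maxnP P y (>= y) (fun b => #|[set x | x <= b]|) y_ok) => x le_yx x_max.
exists x => // v; apply/negP=> lt_xv.
move: (x_max v (le_trans le_yx (ltW lt_xv))) => /=.
by rewrite leqNgt (proper_card (proper_downset lt_xv)).
Qed.

End FinitePoset.

Section RankFunction.
Variables (disp : Order.disp_t) (P : finPOrderType disp) (r : P -> nat).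
Hypothesis r_rank : rank_fun r.

Lemma rank_cover (x y : P) : covers x y -> r x = (r y).+1.
Proof. by case: r_rank => _; apply. Qed.

Lemma rank_gt0 (x : P) : (0 < r x)%N.
Proof.
case: (boolP (is_minimal x)) => [/(proj1 r_rank x) -> //|].
case/forallPn=> y; rewrite negbK => /exists_covered_above[b _ /rank_cover ->] //.
Qed.

Lemma rank_lt (x y : P) : x < y -> (r x < r y)%N.
Proof.
have [n] := ubnP #|[set z | z <= y]|; elim: n x y => // n IH x y size_y lt_xy.
have [b le_xb /[dup] /rank_cover -> /andP[lt_by _]] := exists_covered_above lt_xy.
rewrite ltnS; have [-> // | ne_xb] := eqVneq x b.
apply/ltnW/IH; last by rewrite lt_neqAle ne_xb.
exact: leq_trans (proper_card (proper_downset lt_by)) _.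
Qed.

Lemma rank_le (x y : P) : x <= y -> (r x <= r y)%N.
Proof. by rewrite le_eqVlt => /predU1P[-> // | /rank_lt /ltnW]. Qed.

Lemma exists_cover_below (x : P) : (1 < r x)%N -> exists b, covers x b.
Proof.
move=> r_gt1; case: (boolP (is_minimal x)) => [/(proj1 r_rank x) r1|].
  by rewrite r1 in r_gt1.
by case/forallPn=> y; rewrite negbK => /exists_covered_above[b _]; exists b.
Qed.

Lemma comparable_rank_inj (x y : P) : (x <= y) || (y <= x) -> r x = r y -> x = y.
Proof.
have [-> // | ne_xy] := eqVneq x y.
case/orP=> [le_xy | le_yx] r_xy.
  by move: (@rank_lt x y); rewrite lt_neqAle ne_xy le_xy r_xy ltnn => /(_ isT).
by move: (@rank_lt y x); rewrite lt_neqAle eq_sym ne_xy le_yx r_xy ltnn => /(_ isT).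
Qed.

Definition down_step (z : P) : P := odflt z [pick b | covers z b].

Lemma down_step_le (z : P) : down_step z <= z.
Proof. by rewrite /down_step; case: pickP => [b /andP[/ltW]|]. Qed.

Lemma rank_down_step (z : P) : (1 < r z)%N -> r (down_step z) = (r z).-1.
Proof.
case/exists_cover_below=> b cov_zb; rewrite /down_step.
by case: pickP => [c /rank_cover -> | /(_ b)]; rewrite ?cov_zb.
Qed.

Lemma rank_iter_down_step (x : P) i : (i < r x)%N -> r (iter i down_step x) = r x - i.
Proof.
elim: i => [|i IH] lt_ix; first by rewrite subn0.
have r_i := IH (ltnW lt_ix).
by rewrite iterS rank_down_step r_i ?subnS //; lia.
Qed.

Lemma iter_down_step_le (x : P) i j : (i <= j)%N -> iter j down_step x <= iter i down_step x.
Proof.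
move/subnK <-; elim: (j - i) => [|k IH] //.
by rewrite addSn iterS (le_trans (down_step_le _)).
Qed.

Definition down_chain (x : P) : {set P} :=
  [set iter i down_step x | i : 'I_(r x)].

Lemma card_down_chain (x : P) : #|down_chain x| = r x.
Proof.
rewrite card_imset ?card_ord // => i j eq_ij; apply: val_inj.
have := rank_iter_down_step (ltn_ord i); rewrite eq_ij rank_iter_down_step //.
by have := ltn_ord i; have := ltn_ord j; rewrite /=; lia.
Qed.

Lemma down_chain_is_chain (x : P) : is_chain (down_chain x).
Proof.
apply/forall_inP=> _ /imsetP[i _ ->]; apply/forall_inP=> _ /imsetP[j _ ->].
by case: (leqP i j) => [/iter_down_step_le -> | /ltnW/iter_down_step_le ->]; rewrite ?orbT.
Qed.

Lemma down_chain_max (x : P) : (forall v, ~~ (x < v)) -> is_max_chain (down_chain x).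
Proof.
move=> x_max; rewrite /is_max_chain down_chain_is_chain.
apply/forallP=> D; apply/implyP=> /andP[chain_D sub_CD].
rewrite eqEsubset sub_CD andbT; apply/subsetP=> z zD.
have cmp a : a \in D -> (z <= a) || (a <= z).
  by move: a; apply/forall_inP; move/forall_inP: chain_D; apply.
have xC : x \in down_chain x by apply/imsetP; exists (Ordinal (rank_gt0 x)).
have le_zx : z <= x.
  case/orP: (cmp x (subsetP sub_CD x xC)) => //; rewrite le_eqVlt => /predU1P[-> // | lt_xz].
  by move: (x_max z); rewrite lt_xz.
have lt_i : (r x - r z < r x)%N by have := rank_gt0 z; have := rank_le le_zx; lia.
have iter_C : iter (r x - r z) down_step x \in down_chain x.
  by apply/imsetP; exists (Ordinal lt_i).
rewrite (comparable_rank_inj (cmp _ (subsetP sub_CD _ iter_C))) //.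
by rewrite rank_iter_down_step // subKn // rank_le.
Qed.

Lemma exists_rank_between (y x : P) t :
  y <= x -> (r y <= t <= r x)%N -> exists2 z, y <= z & r z = t.
Proof.
have [n] := ubnP (r x); elim: n x => // n IH x lt_xn le_yx /andP[le_yt le_tx].
have [-> | ne_tx] := eqVneq t (r x); first by exists x.
have lt_yx : y < x.
  rewrite lt_neqAle le_yx andbT; apply: contraNneq ne_tx => eq_yx.
  by rewrite eqn_leq le_tx -eq_yx.
have [b le_yb /rank_cover r_xb] := exists_covered_above lt_yx.
apply: (IH b) => //; first by rewrite -ltnS -r_xb.
by rewrite le_yt -ltnS -r_xb ltn_neqAle ne_tx.
Qed.

Hypothesis P_graded : graded P.

Lemma rank_maximal (x : P) : (forall v, ~~ (x < v)) -> r x = top_rank r.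
Proof.
move=> x_max; have P_gt0 : (0 < #|P|)%N by apply/card_gt0P; exists x.
have [w top_w] := bigop.eq_bigmax r P_gt0.
have w_max v : ~~ (w < v).
  by apply/negP=> /rank_lt; rewrite -top_w ltnNge bigop.leq_bigmax.
rewrite /top_rank top_w -card_down_chain -(card_down_chain w).
exact: P_graded (down_chain_max _) (down_chain_max _).
Qed.

Lemma exists_above_of_rank (y : P) t :
  (r y <= t <= top_rank r)%N -> exists2 z, y <= z & r z = t.
Proof.
move=> t_between; have [x le_yx x_max] := exists_maximal_above y.
by apply: exists_rank_between le_yx _; rewrite (rank_maximal x_max).
Qed.

End RankFunction.

Lemma min_complP (T : finType) (le : rel T) (I : {set T}) (x : T) :
  reflect (x \notin I /\ forall y, y \notin I -> le y x -> y = x)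
          (x \in min_compl le I).
Proof.
rewrite inE; apply: (iffP andP) => -[xI x_min]; split=> //.
  by move=> y yI le_yx; apply/eqP; move/forallP: x_min => /(_ y); rewrite yI le_yx.
by apply/forallP=> y; apply/implyP=> /andP[yI le_yx]; rewrite (x_min y).
Qed.

Section FullRankIdeals.
Variables (disp : Order.disp_t) (P : finPOrderType disp) (r : P -> nat) (m : nat).
Hypothesis r_rank : rank_fun r.
Notation le := (@prodle m disp P).

Lemma full_rank_rowE (I : {set 'I_m * P}) (j : 'I_m) :
  full_rank r I -> exists k, forall a, ((j, a) \in I) = (r a <= k)%N.
Proof.
move=> /(_ j)[k [_ /setP row_j]]; exists k => a.
by move: (row_j a); rewrite !inE.
Qed.

Lemma min_compl_row (I : {set 'I_m * P}) j a :
  full_rank r I -> (j, a) \in min_compl le I ->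
  forall c, ((j, c) \in I) = (r c < r a)%N.
Proof.
move=> I_full /min_complP[aI a_min]; have [k row_j] := full_rank_rowE j I_full.
have lt_ka : (k < r a)%N by rewrite ltnNge -row_j.
suff -> : r a = k.+1 by move=> c; rewrite row_j ltnS.
apply/eqP; rewrite eqn_leq lt_ka andbT leqNgt; apply/negP=> lt_ka1.
have [b cov_ab] := exists_cover_below r_rank (leq_ltn_trans (ltn0Sn k) lt_ka1).
have bI : (j, b) \notin I by rewrite row_j -ltnS -(rank_cover r_rank cov_ab) -ltnNge.
move: cov_ab => /andP[lt_ba _].
have [eq_ba] : (j, b) = (j, a) by apply: a_min; rewrite // /prodle /= leqnn ltW.
by rewrite eq_ba ltxx in lt_ba.
Qed.

Lemma min_compl_rank (I : {set 'I_m * P}) j a b :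
  full_rank r I -> (j, a) \in min_compl le I -> r b = r a ->
  (j, b) \in min_compl le I.
Proof.
move=> I_full /[dup] a_min /(min_compl_row I_full) row_j r_ba.
have [_ a_min'] := min_complP _ _ _ a_min.
apply/min_complP; split=> [|[i c] cI /andP[/= le_ij le_cb]].
  by rewrite row_j r_ba ltnn.
have [eq_ij | ne_ij] := eqVneq i j.
  subst i; congr (_, _); apply: (comparable_rank_inj r_rank); first by rewrite le_cb.
  by apply/eqP; rewrite eqn_leq rank_le //= r_ba leqNgt -row_j.
have aI : (i, a) \in I.
  apply: contraT => aI; have [eq_ij] : (i, a) = (j, a).
    by apply: a_min'; rewrite // /prodle /= le_ij lexx.
  by rewrite eq_ij eqxx in ne_ij.
have [k row_i] := full_rank_rowE i I_full.
by move: cI; rewrite row_i (leq_trans (rank_le r_rank le_cb)) // r_ba -row_i.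
Qed.

Hypothesis P_graded : graded P.

Lemma Xmap_full_rank (I : {set 'I_m * P}) : full_rank r I -> full_rank r (Xmap le I).
Proof.
move=> I_full j.
pose above_j (p : 'I_m * P) := (p \in min_compl le I) && (j <= p.1)%N.
have top_ge (a : P) : (r a <= top_rank r)%N by apply: bigop.leq_bigmax.
exists (\max_(p | above_j p) r p.2); split; first exact/bigmax_leqP.
apply/setP=> y; rewrite !inE; apply/existsP/idP.
  case=> -[i a] /andP[p_min /andP[/= le_ji le_ya]].
  apply: leq_trans (rank_le r_rank le_ya) _.
  by apply: (leq_bigmax_cond (i, a)); rewrite /above_j p_min.
move=> le_yK; case: (boolP [exists p, above_j p && (r y <= r p.2)%N]).
  case/existsP=> -[i a] /andP[/andP[p_min le_ji] le_ya].
  have [|z le_yz r_za] := exists_above_of_rank r_rank P_graded (y := y) (t := r a).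
    by rewrite le_ya top_ge.
  by exists (i, z); rewrite (min_compl_rank I_full p_min r_za) /prodle /= le_ji.
move/existsPn=> none; suff : (\max_(p | above_j p) r p.2 <= (r y).-1)%N.
  by move: le_yK; have := rank_gt0 r_rank y; lia.
apply/bigmax_leqP=> p p_above; rewrite -ltnS prednK ?(rank_gt0 r_rank) //.
by move: (none p); rewrite p_above ltnNge.
Qed.

End FullRankIdeals.

Theorem lemma2p6 (disp : Order.disp_t) (P : finPOrderType disp) (r : P -> nat)
  (m : nat) (I : {set 'I_m * P}) :
  graded P -> rank_fun r -> (0 < m)%N ->
  lower_ideal (@prodle m disp P) I ->
  (full_rank r I <->
   forall n : nat, full_rank r (iter n (Xmap (@prodle m disp P)) I)).
Proof.
move=> P_graded r_rank _ _; split=> [I_full n | /(_ 0%N) //].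
by elim: n => //= n; apply: Xmap_full_rank.
Qed.
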